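(* Let $T^-,T'^-\in\Omega^-$, $T^+,T'^+\in\Omega^+$, and let $X$ be a predicate variable or predicate symbol. (1) If $X$ is positive (resp. negative) in $T^-$, then $T^-[T'^-/X]\in\Omega^-$ (resp. $T^-[T'^+/X]\in\Omega^-$). (2) If $X$ is positive (resp. negative) in $T^+$, then $T^+[T'^+/X]\in\Omega^+$ (resp. $T^+[T'^-/X]\in\Omega^+$). (3) For any types $T,F$: if $T[F/X]\in\Omega^+$ (resp. $T[F/X]\in\Omega^-$), then $T\in\Omega^+$ (resp. $T\in\Omega^-$).
   Context: $TTR$ types: over a second-order language with first-order variables, function symbols, $n$-ary predicate variables and symbols; atomic $\perp$ and $X(t_1,\dots,t_n)$; constructors $\to$, $\forall x$, $\forall X$, and $\mu Cx_1\dots x_nA\langle t_1,\dots,t_n\rangle$ for $C$ an $n$-ary predicate symbol occurring and positive in $A$. Positivity: $X$ is positive and negative in $A$ if it does not occur in $A$; positive and not negative in $X(\bar t)$; positive (negative) in $B\to C$ iff negative (positive) in $B$ and positive (negative) in $C$; for $v\ne X$ positive (negative) in $\forall vB$ iff in $B$; positive (negative) in $\mu C\bar xB\langle\bar t\rangle$ iff in $B$. $T[F/X]$ denotes $T[F/X(x_1,\dots,x_n)]$: each atomic $X(t_1,\dots,t_n)$ is replaced by $F[t_1/x_1,\dots,t_n/x_n]$. $\Omega^+$ ($\forall$-positive) and $\Omega^-$ ($\forall$-negative): atomic types are in both; if $T^+\in\Omega^+$, $T^-\in\Omega^-$ then $T^-\to T^+\in\Omega^+$ and $T^+\to T^-\in\Omega^-$;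 if $T^+\in\Omega^+$ then $\forall xT^+,\forall XT^+\in\Omega^+$; if $T^-\in\Omega^-$ then $\forall xT^-\in\Omega^-$, and $\forall XT^-\in\Omega^-$ when $X$ is not free in $T^-$; if $T^+\in\Omega^+$ and $C$ is an $n$-ary predicate symbol occurring and positive in $T^+$ then $\mu Cx_1\dots x_nT^+\langle t_1,\dots,t_n\rangle\in\Omega^+$. *)

From Stdlib Require Import List Bool Arith.
Import ListNotations.

Inductive term : Type :=
| TVar (i : nat)
| TFun (f : nat) (args : list term).

(* Head of an atomic type: a predicate variable (de Bruijn index, in the
   predicate-variable namespace) or a predicate symbol (constant). *)
Inductive phead : Type :=
| PVar (i : nat)
| PSym (c : nat).

(* Types.
   - AllT A      : forall x A      (binds term index 0 in A)
   - AllP n A    : forall X A      (X n-ary; binds predicate index 0 in A)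
   - Mu n A ts   : mu C x_1..x_n A <ts>  (binds predicate index 0 = C and
                   term indices 0..n-1 = x_1..x_n in A; ts lie outside). *)
Inductive ty : Type :=
| Bot
| Atom (p : phead) (ts : list term)
| Arr (A B : ty)
| AllT (A : ty)
| AllP (n : nat) (A : ty)
| Mu (n : nat) (A : ty) (ts : list term).

Definition phead_eqb (p q : phead) : bool :=
  match p, q with
  | PVar i, PVar j => Nat.eqb i j
  | PSym c, PSym d => Nat.eqb c d
  | _, _ => false
  end.

Definition pshift (p : phead) : phead :=
  match p with PVar i => PVar (S i) | PSym c => PSym c end.

Fixpoint occurs (X : phead) (T : ty) : bool :=
  match T with
  | Bot => false
  | Atom p _ => phead_eqb p X
  | Arr A B => occurs X A || occurs X B
  | AllT A => occurs X A
  | AllP _ A => occurs (pshift X) A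
  | Mu _ A _ => occurs (pshift X) A
  end.

Fixpoint polar (b : bool) (X : phead) (T : ty) : bool :=
  match T with
  | Bot => true
  | Atom p _ => b || negb (phead_eqb p X)
  | Arr A B => polar (negb b) X A && polar b X B
  | AllT A => polar b X A
  | AllP _ A => polar b (pshift X) A
  | Mu _ A _ => polar b (pshift X) A
  end.

Definition positive (X : phead) (T : ty) : bool := polar true X T.
Definition negative (X : phead) (T : ty) : bool := polar false X T.

Fixpoint tsubst (s : nat -> term) (t : term) : term :=
  match t with
  | TVar i => s i
  | TFun f l => TFun f (map (tsubst s) l)
  end.

Definition tup (s : nat -> term) : nat -> term :=
  fun i => match i with
           | 0 => TVar 0
           | S i' => tsubst (fun k => TVar (S k)) (s i')
           end.

Definition tupn (n : nat) (s : nat -> term) : nat -> term := Nat.iter n tup s.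

Definition pup (r : nat -> nat) : nat -> nat :=
  fun i => match i with 0 => 0 | S i' => S (r i') end.

Definition prename (r : nat -> nat) (p : phead) : phead :=
  match p with PVar i => PVar (r i) | PSym c => PSym c end.

Fixpoint tymap (s : nat -> term) (r : nat -> nat) (T : ty) : ty :=
  match T with
  | Bot => Bot
  | Atom p ts => Atom (prename r p) (map (tsubst s) ts)
  | Arr A B => Arr (tymap s r A) (tymap s r B)
  | AllT A => AllT (tymap (tup s) r A)
  | AllP n A => AllP n (tymap s (pup r) A)
  | Mu n A ts => Mu n (tymap (tupn n s) (pup r) A) (map (tsubst s) ts)
  end.

(* Instantiation F[t_1/x_1,...,t_n/x_n] placed at a position of T under
   k term binders and j predicate binders.  In F, term indices 0..n-1 are
   the parameters x_1..x_n, index n+m is the free term variable m of the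
   ambient context; free predicate variables of F are those of the
   ambient context. *)
Definition inst (n k j : nat) (F : ty) (ts : list term) : ty :=
  tymap (fun i => if i <? n then nth i ts (TVar 0) else TVar (i - n + k))
        (fun i => i + j) F.

Definition pliftn (j : nat) (X : phead) : phead :=
  match X with PVar i => PVar (i + j) | PSym c => PSym c end.

Fixpoint subst_go (X : phead) (n : nat) (F : ty) (k j : nat) (T : ty) : ty :=
  match T with
  | Bot => Bot
  | Atom p ts => if phead_eqb p (pliftn j X) then inst n k j F ts else Atom p ts
  | Arr A B => Arr (subst_go X n F k j A) (subst_go X n F k j B)
  | AllT A => AllT (subst_go X n F (S k) j A)
  | AllP m A => AllP m (subst_go X n F k (S j) A)
  | Mu m A ts => Mu m (subst_go X n F (m + k) (S j) A) ts
  end.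

Definition subst (X : phead) (n : nat) (F : ty) (T : ty) : ty :=
  subst_go X n F 0 0 T.

Inductive OmegaP : ty -> Prop :=
| OP_bot : OmegaP Bot
| OP_atom p ts : OmegaP (Atom p ts)
| OP_arr A B : OmegaN A -> OmegaP B -> OmegaP (Arr A B)
| OP_allT A : OmegaP A -> OmegaP (AllT A)
| OP_allP n A : OmegaP A -> OmegaP (AllP n A)
| OP_mu n A ts : OmegaP A -> occurs (PVar 0) A = true ->
    positive (PVar 0) A = true -> OmegaP (Mu n A ts)
with OmegaN : ty -> Prop :=
| ON_bot : OmegaN Bot
| ON_atom p ts : OmegaN (Atom p ts)
| ON_arr A B : OmegaP A -> OmegaN B -> OmegaN (Arr A B)
| ON_allT A : OmegaN A -> OmegaN (AllT A)
| ON_allP n A : OmegaN A -> occurs (PVar 0) A = false -> OmegaN (AllP n A).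

(* Substituting F for X only rewrites atoms X(ts), which lie in both classes,
   into instances of F, and leaves the shape of T together with the
   occurrence and polarity of every bound predicate variable unchanged.
   Hence membership of T in Omega^+/Omega^- can be read back from T[F/X]
   (part 3), and conversely is preserved as soon as every replaced atom sits
   at a position where F itself is admissible: an atom of polarity c inside a
   type of class b sees the class b when X is positive and the opposite class
   when X is negative (parts 1 and 2). *)
From Stdlib Require Import Bool Arith Lia FinFun.

Definition Omega (b : bool) (T : ty) : Prop := if b then OmegaP T else OmegaN T.

Lemma polar_not_occurs (T : ty) (Y : phead) (b : bool) :
  occurs Y T = false -> polar b Y T = true.
Proof.
  revert Y b; induction T; intros Y b HY; simpl in *; auto.
  - now rewrite HY, orb_true_r.
  - apply orb_false_iff in HY as [HA HB]. now rewrite IHT1, IHT2.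
Qed.

Lemma pup_injective (r : nat -> nat) : Injective r -> Injective (pup r).
Proof.
  intros Hr [|x] [|y]; simpl; intro E; try discriminate; auto.
Qed.

Lemma pshift_prename (r : nat -> nat) (Y : phead) :
  pshift (prename r Y) = prename (pup r) (pshift Y).
Proof. now destruct Y. Qed.

Lemma phead_eqb_prename (r : nat -> nat) (p Y : phead) :
  Injective r -> phead_eqb (prename r p) (prename r Y) = phead_eqb p Y.
Proof.
  intro Hr; destruct p as [i|c], Y as [i'|c']; simpl; auto.
  destruct (Nat.eqb_spec i i'), (Nat.eqb_spec (r i) (r i')); subst; auto.
  exfalso; auto.
Qed.

Lemma occurs_tymap (T : ty) (s : nat -> term) (r : nat -> nat) (Y : phead) :
  Injective r -> occurs (prename r Y) (tymap s r T) = occurs Y T.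
Proof.
  revert s r Y; induction T; intros s r Y Hr; simpl; auto.
  - now apply phead_eqb_prename.
  - now rewrite IHT1, IHT2.
  - rewrite pshift_prename. now apply IHT, pup_injective.
  - rewrite pshift_prename. now apply IHT, pup_injective.
Qed.

Lemma polar_tymap (T : ty) (s : nat -> term) (r : nat -> nat) (Y : phead)
  (b : bool) :
  Injective r -> polar b (prename r Y) (tymap s r T) = polar b Y T.
Proof.
  revert s r Y b; induction T; intros s r Y b Hr; simpl; auto.
  - now rewrite phead_eqb_prename.
  - now rewrite IHT1, IHT2.
  - rewrite pshift_prename. now apply IHT, pup_injective.
  - rewrite pshift_prename. now apply IHT, pup_injective.
Qed.

Lemma occurs0_tymap_pup (T : ty) (s : nat -> term) (r : nat -> nat) :
  Injective r -> occurs (PVar 0) (tymap s (pup r) T) = occurs (PVar 0) T.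
Proof.
  intro Hr. exact (occurs_tymap T s (pup r) (PVar 0) (pup_injective r Hr)).
Qed.

Lemma polar0_tymap_pup (T : ty) (s : nat -> term) (r : nat -> nat) (b : bool) :
  Injective r -> polar b (PVar 0) (tymap s (pup r) T) = polar b (PVar 0) T.
Proof.
  intro Hr. exact (polar_tymap T s (pup r) (PVar 0) b (pup_injective r Hr)).
Qed.

Lemma Omega_tymap (T : ty) (s : nat -> term) (r : nat -> nat) (b : bool) :
  Injective r -> Omega b T -> Omega b (tymap s r T).
Proof.
  revert s r b; induction T; intros s r b Hr HT;
    destruct b; simpl in *; inversion HT; subst; constructor.
  - now apply (IHT1 s r false Hr).
  - now apply (IHT2 s r true Hr).
  - now apply (IHT1 s r true Hr).
  - now apply (IHT2 s r false Hr).
  - now apply (IHT _ r true Hr).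
  - now apply (IHT _ r false Hr).
  - now apply (IHT s _ true (pup_injective r Hr)).
  - now apply (IHT s _ false (pup_injective r Hr)).
  - now rewrite occurs0_tymap_pup.
  - now apply (IHT _ _ true (pup_injective r Hr)).
  - now rewrite occurs0_tymap_pup.
  - unfold positive in *. now rewrite polar0_tymap_pup.
Qed.

Lemma not_occurs_tymap (F : ty) (s : nat -> term) (r : nat -> nat) (i : nat) :
  (forall x, r x <> i) -> occurs (PVar i) (tymap s r F) = false.
Proof.
  revert s r i; induction F; intros s r i Hr; simpl; auto.
  - destruct p; simpl; auto. now apply Nat.eqb_neq.
  - now rewrite IHF1, IHF2.
  - apply IHF. intros [|x]; simpl; auto.
  - apply IHF. intros [|x]; simpl; auto.
Qed.

(* Under [j] predicate binders the instances [inst n k j F ts] only mention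
   predicate variables [>= j], so the bound variables [i < j] are untouched. *)

Lemma phead_eqb_pliftn_below (X p : phead) (i j : nat) :
  i < j -> phead_eqb p (pliftn j X) = true -> phead_eqb p (PVar i) = false.
Proof.
  intros Hij; destruct p as [a|c], X as [x|d]; simpl; intro E;
    try discriminate; try reflexivity.
  apply Nat.eqb_eq in E. apply Nat.eqb_neq. lia.
Qed.

Lemma occurs_inst_below (n k j i : nat) (F : ty) (ts : list term) :
  i < j -> occurs (PVar i) (inst n k j F ts) = false.
Proof. intro Hij. apply not_occurs_tymap. lia. Qed.

Lemma occurs_subst_go_below (X : phead) (n : nat) (F T : ty) (k j i : nat) :
  i < j -> occurs (PVar i) (subst_go X n F k j T) = occurs (PVar i) T.
Proof.
  revert k j i; induction T; intros k j i Hij; simpl; auto.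
  - destruct (phead_eqb p (pliftn j X)) eqn:E; simpl; auto.
    rewrite (phead_eqb_pliftn_below X p i j Hij E).
    now apply occurs_inst_below.
  - now rewrite IHT1, IHT2.
  - apply IHT; lia.
  - apply IHT; lia.
Qed.

Lemma polar_subst_go_below (X : phead) (n : nat) (F T : ty) (k j i : nat)
  (b : bool) :
  i < j -> polar b (PVar i) (subst_go X n F k j T) = polar b (PVar i) T.
Proof.
  revert k j i b; induction T; intros k j i b Hij; simpl; auto.
  - destruct (phead_eqb p (pliftn j X)) eqn:E; simpl; auto.
    rewrite (phead_eqb_pliftn_below X p i j Hij E), orb_true_r.
    now apply polar_not_occurs, occurs_inst_below.
  - now rewrite IHT1, IHT2.
  - apply IHT; lia.
  - apply IHT; lia.
Qed.

Lemma occurs0_subst_go (X : phead) (n : nat) (F T : ty) (k j : nat) :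
  occurs (PVar 0) (subst_go X n F k (S j) T) = occurs (PVar 0) T.
Proof. apply occurs_subst_go_below, Nat.lt_0_succ. Qed.

Lemma polar0_subst_go (X : phead) (n : nat) (F T : ty) (k j : nat) (b : bool) :
  polar b (PVar 0) (subst_go X n F k (S j) T) = polar b (PVar 0) T.
Proof. apply polar_subst_go_below, Nat.lt_0_succ. Qed.

Lemma Omega_subst_go_inv (X : phead) (n : nat) (F T : ty) (k j : nat)
  (b : bool) :
  Omega b (subst_go X n F k j T) -> Omega b T.
Proof.
  revert k j b; induction T; intros k j b HT; destruct b; simpl in *;
    try (destruct (phead_eqb p (pliftn j X)); constructor);
    inversion HT; subst; constructor.
  - now apply (IHT1 k j false).
  - now apply (IHT2 k j true).
  - now apply (IHT1 k j true).
  - now apply (IHT2 k j false).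
  - now apply (IHT (S k) j true).
  - now apply (IHT (S k) j false).
  - now apply (IHT k (S j) true).
  - now apply (IHT k (S j) false).
  - now rewrite occurs0_subst_go in *.
  - now apply (IHT (n0 + k) (S j) true).
  - now rewrite occurs0_subst_go in *.
  - unfold positive in *.
    now rewrite polar0_subst_go in *.
Qed.

Lemma pshift_pliftn (X : phead) (j : nat) : pshift (pliftn j X) = pliftn (S j) X.
Proof. destruct X; simpl; f_equal; lia. Qed.

(* [c = true]: the lifted X is positive in T, so every replaced atom has the
   class [b] of T; [c = false]: it is negative, and the atoms see [negb b]. *)
Lemma Omega_subst_go (X : phead) (n : nat) (F T : ty) (k j : nat) (b c : bool) :
  Omega b T -> polar c (pliftn j X) T = true ->
  Omega (if c then b else negb b) F -> Omega b (subst_go X n F k j T).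
Proof.
  revert k j b c; induction T; intros k j b c HT Hpol HF; simpl in *.
  - exact HT.
  - destruct (phead_eqb p (pliftn j X)) eqn:E; [|exact HT].
    destruct c; simpl in Hpol; [|discriminate].
    apply Omega_tymap; [intros x y; lia | exact HF].
  - apply andb_true_iff in Hpol as [HpA HpB].
    assert (HFA : Omega (if negb c then negb b else negb (negb b)) F)
      by now destruct b, c.
    destruct b; simpl in *; inversion HT; subst; constructor.
    + now apply (IHT1 k j false (negb c)).
    + now apply (IHT2 k j true c).
    + now apply (IHT1 k j true (negb c)).
    + now apply (IHT2 k j false c).
  - destruct b; simpl in *; inversion HT; subst; constructor.
    + now apply (IHT (S k) j true c).
    + now apply (IHT (S k) j false c).
  - rewrite pshift_pliftn in Hpol.
    destruct b; simpl in *; inversion HT; subst; constructor.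
    + now apply (IHT k (S j) true c).
    + now apply (IHT k (S j) false c).
    + now rewrite occurs0_subst_go.
  - rewrite pshift_pliftn in Hpol.
    destruct b; simpl in *; inversion HT; subst; constructor.
    + now apply (IHT (n0 + k) (S j) true c).
    + now rewrite occurs0_subst_go.
    + unfold positive in *.
      now rewrite polar0_subst_go.
Qed.

Lemma pliftn_0 (X : phead) : pliftn 0 X = X.
Proof. destruct X; simpl; auto. Qed.

Lemma Omega_subst (X : phead) (n : nat) (F T : ty) (b c : bool) :
  Omega b T -> polar c X T = true ->
  Omega (if c then b else negb b) F -> Omega b (subst X n F T).
Proof.
  intros HT Hpol HF. apply (Omega_subst_go X n F T 0 0 b c); auto.
  now rewrite pliftn_0.
Qed.

Theorem lemma5p1 (X : phead) (n : nat) :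
  (* (1) *)
  (forall Tm T'm, OmegaN Tm -> OmegaN T'm -> positive X Tm = true ->
     OmegaN (subst X n T'm Tm)) /\
  (forall Tm T'p, OmegaN Tm -> OmegaP T'p -> negative X Tm = true ->
     OmegaN (subst X n T'p Tm)) /\
  (* (2) *)
  (forall Tp T'p, OmegaP Tp -> OmegaP T'p -> positive X Tp = true ->
     OmegaP (subst X n T'p Tp)) /\
  (forall Tp T'm, OmegaP Tp -> OmegaN T'm -> negative X Tp = true ->
     OmegaP (subst X n T'm Tp)) /\
  (* (3) *)
  (forall T F, OmegaP (subst X n F T) -> OmegaP T) /\
  (forall T F, OmegaN (subst X n F T) -> OmegaN T).
Proof.
  unfold positive, negative.
  repeat split.
  - intros T F HT HF Hpol. exact (Omega_subst X n F T false true HT Hpol HF).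
  - intros T F HT HF Hpol. exact (Omega_subst X n F T false false HT Hpol HF).
  - intros T F HT HF Hpol. exact (Omega_subst X n F T true true HT Hpol HF).
  - intros T F HT HF Hpol. exact (Omega_subst X n F T true false HT Hpol HF).
  - intros T F. exact (Omega_subst_go_inv X n F T 0 0 true).
  - intros T F. exact (Omega_subst_go_inv X n F T 0 0 false).
Qed.
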